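(* Let $X\in\mathbb{R}^d$ be a random vector with mean $\theta_0$ and covariance matrix $\Sigma_0$, and assume (A1): $\Sigma_0$ is a finite covariance matrix of full rank $d$. Let $X_1,\dots,X_n$ ($n>d$) be independent copies of $X$, let $\Theta_n$ be the interior of the convex hull of $X_1,\dots,X_n$, let $\tilde\theta=\frac1n\sum_{i=1}^n X_i$ be the sample mean, and let $l(\theta)$ be the empirical log-likelihood ratio for the mean (defined in the context). Define the composite similarity mapping $h_n^C:\Theta_n\to\mathbb{R}^d$ by $$h_n^C(\theta)=\tilde\theta+\gamma\bigl(n,l(\theta)\bigr)(\theta-\tilde\theta),\qquad \gamma\bigl(n,l(\theta)\bigr)=1+\frac{l(\theta)}{2n},\qquad \theta\in\Theta_n.$$ Then: (i) $h_n^C$ has a unique fixed point, namely $\tilde\theta$; (ii) for each $\tau\ge 0$, the restriction of $h_n^C$ to the contour $c(\tau)=\{\theta\in\Theta_n: l(\theta)=\tau\}$ coincides with the similarity mapping $\theta\mapsto\tilde\theta+\gamma(n,\tau)(\theta-\tilde\theta)$ of $\mathbb{R}^d$ (with constant expansion factor $\gamma(n,\tau)=1+\tau/(2n)$); (iii) $h_n^C$ is a bijection from $\Theta_n$ onto $\mathbb{R}^d$.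
   Context: For $\theta\in\mathbb{R}^d$, the empirical likelihood ratio is $R(\theta)=\sup\{\prod_{i=1}^n nw_i : \sum_{i=1}^n w_i(X_i-\theta)=0,\ w_i\ge 0,\ \sum_{i=1}^n w_i=1\}$ (with $R(\theta)=0$ if the constraint set is empty or only allows zero products), and $l(\theta)=-2\log R(\theta)$; one has $0<R(\theta)\le1$ iff $\theta\in\Theta_n$, so $l$ is finite exactly on $\Theta_n$, and $l(\tilde\theta)=0$. Standing convention: whenever (A1) is assumed it is also understood that the convex hull of $X_1,\dots,X_n$ is nondegenerate (i.e. $\Theta_n$ is a nonempty open set), which holds with probability one under (A1) and $n>d$. *)

From HB Require Import structures.
From mathcomp Require Import all_boot all_order all_algebra.
From mathcomp Require Import all_classical all_reals all_analysis.
Set Implicit Arguments. Unset Strict Implicit. Unset Printing Implicit Defensive.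
Import Order.TTheory GRing.Theory Num.Theory.
Import numFieldNormedType.Exports.
Local Open Scope classical_set_scope.
Local Open Scope ring_scope.

Section EL.
Variables (R : realType) (d n : nat) (X : 'I_n -> 'rV[R]_d).

Definition conv_hull : set 'rV[R]_d :=
  [set t | exists w : 'I_n -> R, (forall i, 0 <= w i) /\ \sum_(i < n) w i = 1
           /\ t = \sum_(i < n) w i *: X i].

Definition Theta_n : set 'rV[R]_d := interior conv_hull.

Definition sample_mean : 'rV[R]_d := n%:R^-1 *: \sum_(i < n) X i.

Definition el_feasible (theta : 'rV[R]_d) (w : 'I_n -> R) : Prop :=
  (forall i, 0 <= w i) /\ \sum_(i < n) w i = 1 /\
  \sum_(i < n) w i *: (X i - theta) = 0.

(* empirical likelihood ratio R(theta); sup of the empty set is 0 *)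
Definition el_ratio (theta : 'rV[R]_d) : R :=
  sup [set p | exists w, el_feasible theta w /\ p = \prod_(i < n) (n%:R * w i)].

Definition el_loglik (theta : 'rV[R]_d) : R := - 2 * ln (el_ratio theta).

Definition gamma_factor (tau : R) : R := 1 + tau / (2 * n%:R).

Definition hC (theta : 'rV[R]_d) : 'rV[R]_d :=
  sample_mean + gamma_factor (el_loglik theta) *: (theta - sample_mean).

End EL.

From HB Require Import structures.
From mathcomp Require Import all_boot all_order all_algebra.
From mathcomp Require Import all_classical all_reals all_analysis.
From mathcomp Require Import ring lra.
Set Implicit Arguments.
Unset Strict Implicit.
Unset Printing Implicit Defensive.
Import Order.TTheory GRing.Theory Num.Theory.
Import numFieldNormedType.Exports.
Local Open Scope classical_set_scope.
Local Open Scope ring_scope.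

(* The empirical log-likelihood [l] is finite and nonnegative on [Theta_n], vanishes only at
   the sample mean [m] (a feasible product [prod_i n w_i] is at most
   [exp (- sum_i (n w_i - 1)^2 / (4 n))]), is convex (ln is concave and feasible weights can be
   mixed), and blows up at the boundary of [Theta_n]: a bound [l <= L] bounds all weights of an
   almost optimal [w] from below, so a ball of radius [rho(L)] around the point stays in the
   convex hull.
   [hC] maps each ray [m + t u], [t >= 0], into itself, acting on the parameter as
   [t |-> t gamma(n, l (m + t u))]. On the part of the ray inside [Theta_n] this map is
   continuous and increasing, vanishes at [0], and exceeds [1] before the ray leaves [Theta_n];
   the intermediate value theorem then gives surjectivity, and comparing expansion factors
   gives injectivity. *)

Section RealFacts.
Variable R : realType.

Lemma ln_concave (t a b : R) : 0 <= t -> t <= 1 -> 0 < a -> 0 < b ->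
  t * ln a + (1 - t) * ln b <= ln (t * a + (1 - t) * b).
Proof. by move=> t0 t1 a0 b0; have := concave_ln (Itv01 t0 t1) a0 b0; rewrite !convRE. Qed.

(* With [s = sqrt x]: [ln x = 2 ln s <= 2 (s - 1) = (x - 1) - (s - 1)^2], and
   [(x - 1)^2 = (s - 1)^2 (s + 1)^2] where [(s + 1)^2 <= 2 (x + 1) <= 4 N]. *)
Lemma ln_le_sub1_sqr (x N : R) : 0 < x -> x <= N -> 1 <= N ->
  ln x <= (x - 1) - (x - 1) ^+ 2 / (4 * N).
Proof.
move=> x0 xN N1; have N0 : 0 < N by apply: lt_le_trans ltr01 N1.
have xE : x = Num.sqrt x ^+ 2 by rewrite sqr_sqrtr // ltW.
have : 0 < Num.sqrt x by rewrite sqrtr_gt0.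
move: (Num.sqrt x) xE xN => s -> xN s0.
have ln_s : ln s <= s - 1 by have := @le_ln1Dx R (s - 1); rewrite addrCA subrr addr0; apply; lra.
have gap : (s ^+ 2 - 1) ^+ 2 / (4 * N) <= (s - 1) ^+ 2.
  rewrite ler_pdivrMr ?mulr_gt0 //.
  have -> : (s ^+ 2 - 1) ^+ 2 = (s - 1) ^+ 2 * (s + 1) ^+ 2 by ring.
  by apply: ler_wpM2l; [exact: sqr_ge0 | have := sqr_ge0 (s - 1); nra].
have e : s ^+ 2 - 1 - (s - 1) ^+ 2 = 2 * (s - 1) by ring.
rewrite lnXn // mulr2n; lra.
Qed.

Lemma lipschitz_within_continuous (f : R -> R) (A : set R) (k : R) :
  (forall x y, A x -> A y -> x <= y -> `|f y - f x| <= k * (y - x)) ->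
  {within A, continuous f}.
Proof.
move=> fk; have {}fk x y : A x -> A y -> `|f x - f y| <= k * `|x - y|.
  move=> Ax Ay; have [xy|/ltW yx] := leP x y.
    have dxy : 0 <= y - x by rewrite subr_ge0.
    by rewrite distrC [`|x - y|]distrC (ger0_norm dxy); exact: fk.
  have dyx : 0 <= x - y by rewrite subr_ge0.
  by rewrite (ger0_norm dyx); exact: fk.
apply/subspace_continuousP => x Ax; apply/cvgrPdist_lt => e e0.
have k1 : 0 < `|k| + 1 by rewrite ltr_wpDl.
rewrite near_withinE; apply/nbhs_ballP; exists (e / (`|k| + 1)) => [|y /=].
  by rewrite /= divr_gt0.
rewrite -ball_normE /= ltr_pdivlMr // => xy Ay.
have := fk _ _ Ax Ay; have := ler_norm k; have := normr_ge0 (x - y); nra.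
Qed.

Lemma ln_prod (I : finType) (a : I -> R) : (forall i, 0 < a i) ->
  ln (\prod_i a i) = \sum_i ln (a i).
Proof.
move=> a0; suff [] : 0 < \prod_i a i /\ ln (\prod_i a i) = \sum_i ln (a i) by [].
apply: (big_rec2 (fun x y => 0 < x /\ ln x = y)); first by rewrite ln1.
by move=> i x y _ [x0 <-]; rewrite mulr_gt0 // lnM ?posrE.
Qed.

Lemma prod_le_factor_expn (I : finType) (x : I -> R) (N : R) i : 1 <= N ->
  (forall j, 0 <= x j <= N) -> \prod_j x j <= x i * N ^+ #|I|.
Proof.
move=> N1 xN; have N0 : 0 <= N by apply: le_trans ler01 N1.
have [xi0 _] := andP (xN i).
rewrite (bigD1 i) //= ler_wpM2l //.
apply: (@le_trans _ _ (\prod_(j | j != i) N)); first by apply: ler_prod => j _; exact: xN.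
by rewrite -prodr_const [X in _ <= X](bigD1 i) //= ler_peMl // prodr_ge0.
Qed.

End RealFacts.

Section EmpiricalLikelihood.
Variables (R : realType) (d n : nat) (X : 'I_n -> 'rV[R]_d).
Local Notation hull := (conv_hull X).
Local Notation Th := (Theta_n X).

Lemma el_feasibleE th w : el_feasible X th w <->
  [/\ (forall i, 0 <= w i), \sum_i w i = 1 & th = \sum_i w i *: X i].
Proof.
rewrite /el_feasible.
have -> : \sum_i w i *: (X i - th) = \sum_i w i *: X i - (\sum_i w i) *: th.
  by rewrite scaler_suml -sumrB; apply: eq_bigr => i _; rewrite scalerBr.
split=> [[w0 [-> /eqP]] | [w0 w1 ->]]; last by rewrite w1 scale1r subrr.
by rewrite scale1r subr_eq0 => /eqP.
Qed.

Lemma weight_le1 (w : 'I_n -> R) i : (forall j, 0 <= w j) -> \sum_j w j = 1 -> w i <= 1.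
Proof. by move=> w0 <-; rewrite (bigD1 i) //= lerDl sumr_ge0. Qed.

Lemma combine_weights (a b : R) (v w : 'I_n -> R) :
  a *: (\sum_i v i *: X i) + b *: (\sum_i w i *: X i) =
  \sum_i (a * v i + b * w i) *: X i.
Proof.
rewrite !scaler_sumr -big_split /=; apply: eq_bigr => i _.
by rewrite scalerDl !scalerA.
Qed.

Lemma conv_hull_convex a b (t : R) : hull a -> hull b -> 0 <= t <= 1 ->
  hull (t *: a + (1 - t) *: b).
Proof.
move=> [v [v0 [v1 ->]]] [w [w0 [w1 ->]]] /andP[t0 t1].
exists (fun i => t * v i + (1 - t) * w i); rewrite combine_weights; split=> //.
  by move=> i; rewrite addr_ge0 ?mulr_ge0 ?subr_ge0.
by rewrite big_split /= -!mulr_sumr v1 w1 !mulr1 addrC subrK.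
Qed.

Lemma conv_hull_ball_shrink c q r (t : R) : ball c r `<=` hull -> hull q ->
  0 < t <= 1 -> ball (t *: c + (1 - t) *: q) (t * r) `<=` hull.
Proof.
move=> cA hq /andP[t0 t1] y; rewrite -ball_normE /= => hy.
set p := t *: c + (1 - t) *: q in hy *.
set z := c + t^-1 *: (y - p).
have yE : y = t *: z + (1 - t) *: q.
  by rewrite /z scalerDr scalerA mulfV ?gt_eqF // scale1r /p opprD addrCA !addrA subrK addrK.
rewrite yE; apply: conv_hull_convex => //; last by rewrite ltW.
apply: cA.
rewrite -ball_normE /= /z opprD addrA subrr add0r normrN normrZ ger0_norm ?invr_ge0 ?ltW //.
by rewrite ltr_pdivrMl // -normrN opprB.
Qed.

Lemma ball_sub_Theta c r : ball c r `<=` hull -> ball c r `<=` Th.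
Proof. by rewrite -open_subsetE //; exact: ball_open. Qed.

Lemma Theta_hull : Th `<=` hull.
Proof. by move=> x /nbhs_ballP[r r0 /(_ x (ballxx x r0))]. Qed.

Lemma Theta_conv c q (t : R) : Th c -> hull q -> 0 < t <= 1 -> Th (t *: c + (1 - t) *: q).
Proof.
move=> /nbhs_ballP[r r0 cA] hq /[dup] /andP[t0 _] ht.
exact: (ball_sub_Theta (conv_hull_ball_shrink cA hq ht)) _ (ballxx _ (mulr_gt0 t0 r0)).
Qed.

Lemma Theta_convex a b (t : R) : Th a -> Th b -> 0 <= t <= 1 -> Th (t *: a + (1 - t) *: b).
Proof.
move=> ha hb /andP[t0 t1]; have [->|tn0] := eqVneq t 0.
  by rewrite scale0r add0r subr0 scale1r.
by apply: Theta_conv ha (Theta_hull hb) _; rewrite lt0r tn0 t0 t1.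
Qed.

(* [sum_i w i *: X i = t *: c + (1 - t) *: q] with [t = e / (1 + e)], where [c = sum_i v i *: X i]
   and [q] has the weights [(1 + e) w i - e v i >= 0]. *)
Lemma conv_hull_ball_weights c r (w : 'I_n -> R) (e : R) : 0 < r ->
  ball c r `<=` hull -> 0 < e -> (forall i, e <= w i) -> \sum_i w i = 1 ->
  ball (\sum_i w i *: X i) (e / (1 + e) * r) `<=` hull.
Proof.
move=> r0 cA e0 we w1; have [v [v0 [v1 cE]]] := cA c (ballxx c r0).
have e10 : 0 < 1 + e by rewrite ltr_wpDr // ltW.
set q := \sum_i ((1 + e) * w i - e * v i) *: X i.
have hq : hull q.
  exists (fun i => (1 + e) * w i - e * v i); split=> [i|]; last split=> //.
    by have := weight_le1 i v0 v1; have := we i; nra.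
  by rewrite sumrB -!mulr_sumr w1 v1; ring.
have -> : \sum_i w i *: X i = e / (1 + e) *: c + (1 - e / (1 + e)) *: q.
  rewrite cE combine_weights; apply: eq_bigr => i _; congr (_ *: _).
  by field; rewrite gt_eqF.
apply: conv_hull_ball_shrink => //.
by rewrite divr_gt0 //= ler_pdivrMr // mul1r lerDr ltW.
Qed.

Hypothesis n_gt0 : (0 < n)%N.
Local Notation N := (n%:R : R).
Local Notation m := (sample_mean X).
Local Notation l := (el_loglik X).

Lemma nR_gt0 : 0 < N. Proof. by rewrite ltr0n. Qed.

Lemma nR_ge1 : 1 <= N. Proof. by rewrite ler1n. Qed.

Lemma sum_invn : \sum_(i < n) N^-1 = 1.
Proof. by rewrite sumr_const card_ord -[_ *+ n]mulr_natr mulVf ?gt_eqF ?nR_gt0. Qed.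

Lemma sample_meanE : m = \sum_i N^-1 *: X i.
Proof. by rewrite /sample_mean scaler_sumr. Qed.

Lemma conv_hull_sample_mean : hull m.
Proof.
exists (fun=> N^-1); split; first by move=> i; rewrite invr_ge0 ltW ?nR_gt0.
by rewrite sum_invn sample_meanE.
Qed.

Lemma sub_sample_mean (w : 'I_n -> R) :
  \sum_i w i *: X i - m = N^-1 *: \sum_i (N * w i - 1) *: X i.
Proof.
rewrite sample_meanE scaler_sumr -sumrB; apply: eq_bigr => i _.
by rewrite scalerA -scalerBl mulrBr mulKf ?mulr1 ?gt_eqF ?nR_gt0.
Qed.

Lemma Theta_sample_mean : Th !=set0 -> Th m.
Proof.
case=> c /nbhs_ballP[r r0 cA]; have e0 : 0 < N^-1 by rewrite invr_gt0 nR_gt0.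
have mA := conv_hull_ball_weights r0 cA e0 (fun=> lexx _) sum_invn.
rewrite sample_meanE; apply: (ball_sub_Theta mA); apply: ballxx.
by rewrite mulr_gt0 // divr_gt0 // addr_gt0.
Qed.

(* [th + s *: (th - m)] stays in the hull for small [s > 0], and [th] is the combination
   [(1 + s)^-1 *: (th + s *: (th - m)) + s / (1 + s) *: m], whose weights are all
   [>= s / (1 + s) / N]. *)
Lemma Theta_feasible_gt0 th : Th th -> exists2 w, el_feasible X th w & forall i, 0 < w i.
Proof.
move=> /nbhs_ballP[r r0 thA].
set s := r / (`|th - m| + r).
have s0 : 0 < s by rewrite divr_gt0 // ltr_wpDl.
have : hull (th + s *: (th - m)).
  apply: thA; rewrite -ball_normE /= opprD addrA subrr add0r normrN normrZ gtr0_norm //.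
  by rewrite /s mulrAC ltr_pdivrMr ?ltr_wpDl // mulrDr ltrDl mulr_gt0 // ltr_pDl.
case=> v [v0 [v1 vE]]; have s1 : 0 < 1 + s by rewrite addr_gt0.
have iS0 : 0 <= (1 + s)^-1 by rewrite invr_ge0 ltW.
set w := fun i => (1 + s)^-1 * v i + s / (1 + s) * N^-1.
have iN0 : 0 < N^-1 by rewrite invr_gt0 nR_gt0.
have w_gt0 i : 0 < w i by rewrite ltr_wpDl ?mulr_ge0 // mulr_gt0 // divr_gt0.
exists w => //; apply/el_feasibleE; split=> [i||]; first exact: ltW.
  by rewrite big_split /= -!mulr_sumr v1 sum_invn !mulr1 -[X in X + _]mul1r -mulrDl mulfV ?gt_eqF.
rewrite /w -combine_weights -vE -sample_meanE.
have -> : th + s *: (th - m) = (1 + s) *: th - s *: m.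
  by rewrite scalerDl scale1r scalerBr addrA.
rewrite scalerBr !scalerA mulVf ?gt_eqF // scale1r.
by rewrite [_^-1 * s]mulrC subrK.
Qed.

Definition el_products th := [set p | exists w, el_feasible X th w /\ p = \prod_i (N * w i)].

Lemma el_ratioE th : el_ratio X th = sup (el_products th). Proof. by []. Qed.

Lemma el_weights_gt0_or_prod0 th w : el_feasible X th w ->
  (forall i, 0 < w i) \/ \prod_i (N * w i) = 0.
Proof.
move=> /el_feasibleE[w0 _ _]; have [|/existsNP[i]] := pselect (forall i, 0 < w i); first by left.
move=> /negP; rewrite -leNgt => wi0; right; apply/eqP; rewrite prodf_seq_eq0.
by apply/hasP; exists i; rewrite ?mem_index_enum //= mulf_eq0 [w i == 0]eq_le wi0 w0 orbT.
Qed.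

Lemma el_prod_le_expR th w : el_feasible X th w ->
  \prod_i (N * w i) <= expR (- (\sum_i (N * w i - 1) ^+ 2) / (4 * N)).
Proof.
move=> hw; have [w_gt0|->] := el_weights_gt0_or_prod0 hw; last exact: expR_ge0.
have [w0 w1 _] := (el_feasibleE th w).1 hw.
have x_gt0 i : 0 < N * w i by rewrite mulr_gt0 ?nR_gt0.
have x_le i : N * w i <= N by rewrite ler_piMr ?(ltW nR_gt0) ?weight_le1.
rewrite -[X in X <= _]lnK ?posrE ?prodr_gt0 // ler_expR ln_prod //.
apply: le_trans (ler_sum _ (fun i _ => ln_le_sub1_sqr (x_gt0 i) (x_le i) nR_ge1)) _.
rewrite sumrB; have -> : \sum_i (N * w i - 1) = 0.
  by rewrite sumrB -mulr_sumr w1 mulr1 sumr_const card_ord subrr.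
by rewrite sub0r -mulr_suml mulNr.
Qed.

Lemma el_prod_le1 th w : el_feasible X th w -> \prod_i (N * w i) <= 1.
Proof.
move=> hw; apply: le_trans (el_prod_le_expR hw) _; rewrite expR_le1 mulNr oppr_le0.
by rewrite divr_ge0 ?sumr_ge0 ?mulr_ge0 ?(ltW nR_gt0) // => i _; exact: sqr_ge0.
Qed.

Lemma el_products_ub th : has_ubound (el_products th).
Proof. by exists 1 => _ [w [hw ->]]; exact: el_prod_le1 hw. Qed.

Lemma el_products_neq0 th : hull th -> el_products th !=set0.
Proof.
move=> [w [w0 [w1 thE]]]; exists (\prod_i (N * w i)), w; split=> //.
exact/el_feasibleE.
Qed.

Lemma el_prod_le_ratio th w : el_feasible X th w -> \prod_i (N * w i) <= el_ratio X th.
Proof. by move=> hw; rewrite el_ratioE; apply: (ub_le_sup (el_products_ub th)); exists w. Qed.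

Lemma el_ratio_le1 th : hull th -> el_ratio X th <= 1.
Proof. by move/el_products_neq0/ge_sup; apply=> _ [w [hw ->]]; exact: el_prod_le1 hw. Qed.

Lemma el_ratio_gt0 th : Th th -> 0 < el_ratio X th.
Proof.
move=> /Theta_feasible_gt0[w hw w_gt0]; apply: lt_le_trans (el_prod_le_ratio hw).
by rewrite prodr_gt0 // => i _; rewrite mulr_gt0 ?nR_gt0.
Qed.

Lemma el_ratio_sample_mean : el_ratio X m = 1.
Proof.
apply/le_anti; rewrite (el_ratio_le1 conv_hull_sample_mean) /=.
have hw : el_feasible X m (fun=> N^-1).
  apply/el_feasibleE; split; [by move=> i; rewrite invr_ge0 ltW ?nR_gt0 | exact: sum_invn |].
  exact: sample_meanE.
by apply: le_trans (el_prod_le_ratio hw); rewrite big1 // => i _; rewrite mulfV ?gt_eqF ?nR_gt0.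
Qed.

Lemma el_loglik_ge0 th : hull th -> 0 <= l th.
Proof. by move/el_ratio_le1/ln_le0; rewrite /el_loglik; lra. Qed.

Lemma el_loglik_sample_mean : l m = 0.
Proof. by rewrite /el_loglik el_ratio_sample_mean ln1 mulr0. Qed.

Lemma ln_el_ratio_le th a B : Th th -> 0 < a ->
  (forall w, el_feasible X th w -> (forall i, 0 < w i) -> a * ln (\prod_i (N * w i)) <= B) ->
  a * ln (el_ratio X th) <= B.
Proof.
move=> hth a0 hB; rewrite mulrC -ler_pdivlMr // -[B / a]expRK.
rewrite ler_ln ?posrE ?el_ratio_gt0 ?expR_gt0 // el_ratioE.
apply: ge_sup; first exact: el_products_neq0 (Theta_hull hth).
move=> _ [w [hw ->]]; have [w_gt0|->] := el_weights_gt0_or_prod0 hw; last exact: expR_ge0.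
rewrite -[X in X <= _]lnK ?posrE ?prodr_gt0 // => [|i _]; last by rewrite mulr_gt0 ?nR_gt0.
by rewrite ler_expR ler_pdivlMr // mulrC hB.
Qed.

Lemma ln_el_prod_le_ratio th w : Th th -> el_feasible X th w -> (forall i, 0 < w i) ->
  ln (\prod_i (N * w i)) <= ln (el_ratio X th).
Proof.
move=> hth hw w_gt0; rewrite ler_ln ?posrE ?el_ratio_gt0 ?el_prod_le_ratio //.
by rewrite prodr_gt0 // => i _; rewrite mulr_gt0 ?nR_gt0.
Qed.

Lemma sample_mean_dist_le th w (t : R) : el_feasible X th w ->
  (forall i, `|N * w i - 1| <= t) -> `|th - m| <= t * \sum_i `|X i|.
Proof.
move=> /el_feasibleE[_ _ ->] wt; have iN0 : 0 <= N^-1 by rewrite invr_ge0 ltW ?nR_gt0.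
rewrite sub_sample_mean normrZ ger0_norm //.
apply: (@le_trans _ _ `|\sum_i (N * w i - 1) *: X i|).
  by rewrite ler_piMl // invf_le1 ?nR_gt0 ?nR_ge1.
rewrite mulr_sumr; apply: le_trans (ler_norm_sum _ _ _) _; apply: ler_sum => i _.
by rewrite normrZ ler_wpM2r.
Qed.

(* If [th != m], some [N * w i] must be far from [1], which the bound [el_prod_le_expR]
   turns into a uniform gap [ln R(th) <= - t^2 / (4 N)]. *)
Lemma el_loglik_gt0 th : Th th -> th != m -> 0 < l th.
Proof.
move=> hth thm; set S := \sum_i `|X i|; have S0 : 0 <= S by rewrite sumr_ge0.
set t := `|th - m| / (S + 1).
have t0 : 0 < t by rewrite divr_gt0 ?normr_gt0 ?subr_eq0 // ltr_wpDl.
have c0 : 0 < t ^+ 2 / (4 * N).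
  by apply: divr_gt0; [exact: exprn_gt0 | rewrite mulr_gt0 ?nR_gt0].
suff : 1 * ln (el_ratio X th) <= - (t ^+ 2 / (4 * N)) by rewrite mul1r /el_loglik; lra.
apply: ln_el_ratio_le => // w hw w_gt0; rewrite mul1r.
have [i ti] : exists i, t < `|N * w i - 1|.
  apply: contrapT => none.
  have /(sample_mean_dist_le hw) : forall i, `|N * w i - 1| <= t.
    by move=> i; rewrite leNgt; apply/negP => ti; apply: none; exists i.
  rewrite -/S /t mulrAC ler_pdivlMr ?ltr_wpDl // mulrDr mulr1.
  have : 0 < `|th - m| by rewrite normr_gt0 subr_eq0.
  lra.
have sq : t ^+ 2 <= \sum_j (N * w j - 1) ^+ 2.
  rewrite (bigD1 i) //= -[X in X <= _]addr0 lerD ?sumr_ge0 //.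
    rewrite -[(N * w i - 1) ^+ 2]real_normK ?num_real //.
    by rewrite ler_sqr ?nnegrE ?normr_ge0 ?(ltW t0) ?(ltW ti).
  by move=> j _; exact: sqr_ge0.
have := el_prod_le_expR hw; rewrite -ler_ln ?posrE ?expR_gt0 ?prodr_gt0 // => [|j _]; last first.
  by rewrite mulr_gt0 ?nR_gt0.
by rewrite expRK => h; apply: le_trans h _; rewrite !mulNr lerN2 ler_wpM2r.
Qed.

Lemma ln_prod_mix_le th1 th2 w1 w2 (t : R) : 0 <= t <= 1 -> Th th1 -> Th th2 ->
  el_feasible X th1 w1 -> (forall i, 0 < w1 i) ->
  el_feasible X th2 w2 -> (forall i, 0 < w2 i) ->
  t * ln (\prod_i (N * w1 i)) + (1 - t) * ln (\prod_i (N * w2 i))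
    <= ln (el_ratio X (t *: th1 + (1 - t) *: th2)).
Proof.
move=> t01 h1 h2 hw1 w1_gt0 hw2 w2_gt0; have /andP[t0 t1] := t01.
have [_ w1_sum E1] := (el_feasibleE th1 w1).1 hw1.
have [_ w2_sum E2] := (el_feasibleE th2 w2).1 hw2.
set w := fun i => t * w1 i + (1 - t) * w2 i.
have w_gt0 i : 0 < w i.
  rewrite /w; have [->|tn0] := eqVneq t 0; first by rewrite mul0r add0r subr0 mul1r.
  apply: ltr_pwDl; first by rewrite mulr_gt0 // lt0r tn0.
  by rewrite mulr_ge0 ?subr_ge0 // ltW.
have hw : el_feasible X (t *: th1 + (1 - t) *: th2) w.
  apply/el_feasibleE; split=> [i||]; first exact: ltW.
    by rewrite big_split /= -!mulr_sumr w1_sum w2_sum !mulr1 addrC subrK.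
  by rewrite E1 E2 combine_weights.
apply: le_trans (ln_el_prod_le_ratio (Theta_convex h1 h2 t01) hw w_gt0).
have Nw_gt0 (v : 'I_n -> R) : (forall i, 0 < v i) -> forall i, 0 < N * v i.
  by move=> v_gt0 i; rewrite mulr_gt0 ?nR_gt0.
rewrite (ln_prod (Nw_gt0 _ w1_gt0)) (ln_prod (Nw_gt0 _ w2_gt0)) (ln_prod (Nw_gt0 _ w_gt0)).
rewrite !mulr_sumr -big_split /=; apply: ler_sum => i _.
have -> : N * w i = t * (N * w1 i) + (1 - t) * (N * w2 i) by rewrite /w; ring.
by apply: ln_concave => //; exact: Nw_gt0.
Qed.

Lemma ln_el_ratio_concave th1 th2 (t : R) : Th th1 -> Th th2 -> 0 < t < 1 ->
  t * ln (el_ratio X th1) + (1 - t) * ln (el_ratio X th2)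
    <= ln (el_ratio X (t *: th1 + (1 - t) *: th2)).
Proof.
move=> h1 h2 /andP[t0 t1]; have t01 : 0 <= t <= 1 by rewrite !ltW.
have t1' : 0 < 1 - t by rewrite subr_gt0.
rewrite addrC -lerBrDr; apply: (ln_el_ratio_le h2 t1') => w2 hw2 w2_gt0.
rewrite lerBrDr addrC -lerBrDr; apply: (ln_el_ratio_le h1 t0) => w1 hw1 w1_gt0.
by rewrite lerBrDr; exact: ln_prod_mix_le.
Qed.

Lemma el_loglik_convex th1 th2 (t : R) : Th th1 -> Th th2 -> 0 <= t <= 1 ->
  l (t *: th1 + (1 - t) *: th2) <= t * l th1 + (1 - t) * l th2.
Proof.
move=> h1 h2 /andP[t0 t1].
have [->|tn0] := eqVneq t 0; first by rewrite scale0r add0r subr0 scale1r mul0r add0r mul1r.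
have [->|tn1] := eqVneq t 1; first by rewrite subrr scale0r addr0 scale1r mul0r addr0 mul1r.
have t01 : 0 < t < 1 by rewrite lt0r tn0 t0 lt_neqAle tn1 t1.
have := ln_el_ratio_concave h1 h2 t01; rewrite /el_loglik; nra.
Qed.

Lemma sample_mean_comb x (t : R) : t *: x + (1 - t) *: m = m + t *: (x - m).
Proof. by rewrite scalerBl scale1r scalerBr addrCA. Qed.

Hypothesis Theta_neq0 : Th !=set0.

Lemma Theta_shrink th (s : R) : Th th -> 0 <= s <= 1 -> Th (m + s *: (th - m)).
Proof.
move=> hth hs; rewrite -sample_mean_comb.
exact: Theta_convex hth (Theta_sample_mean Theta_neq0) hs.
Qed.

Lemma el_loglik_shrink th (s : R) : Th th -> 0 <= s <= 1 -> l (m + s *: (th - m)) <= s * l th.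
Proof.
move=> hth hs; rewrite -sample_mean_comb.
apply: le_trans (el_loglik_convex hth (Theta_sample_mean Theta_neq0) hs) _.
by rewrite el_loglik_sample_mean mulr0 addr0.
Qed.

Lemma feasible_weight_ge th w i : el_feasible X th w -> \prod_j (N * w j) / N ^+ n.+1 <= w i.
Proof.
move=> hw; have [w0 w1 _] := (el_feasibleE th w).1 hw.
have xN j : 0 <= N * w j <= N.
  by rewrite mulr_ge0 ?(ltW nR_gt0) //= ler_piMr ?(ltW nR_gt0) ?weight_le1.
rewrite ler_pdivrMr ?exprn_gt0 ?nR_gt0 // exprS mulrA [w i * N]mulrC.
by have := prod_le_factor_expn i nR_ge1 xN; rewrite card_ord.
Qed.

Lemma el_loglik_bounded_ball (L : R) :
  exists2 rho, 0 < rho & forall th, Th th -> l th <= L -> ball th rho `<=` hull.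
Proof.
have [c /nbhs_ballP[r r0 cA]] := Theta_neq0.
set a := expR (- L / 2); have a2 : 0 < a / 2 by rewrite divr_gt0 ?expR_gt0.
set e := a / 2 / N ^+ n.+1; have e0 : 0 < e by rewrite divr_gt0 ?exprn_gt0 ?nR_gt0.
exists (e / (1 + e) * r) => [|th hth hl]; first by rewrite mulr_gt0 // divr_gt0 // addr_gt0.
have aR : a <= el_ratio X th.
  rewrite -[el_ratio X th]lnK ?posrE ?el_ratio_gt0 // ler_expR.
  by move: hl; rewrite /el_loglik; lra.
have Rsup : has_sup (el_products th).
  by split; [exact: el_products_neq0 (Theta_hull hth) | exact: el_products_ub].
have [_ [w [hw ->]] pw] := sup_adherent a2 Rsup; rewrite -el_ratioE in pw.
have [_ w1 ->] := (el_feasibleE th w).1 hw.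
apply: conv_hull_ball_weights r0 cA e0 _ w1 => i.
apply: le_trans (feasible_weight_ge i hw); rewrite ler_pM2r ?invr_gt0 ?exprn_gt0 ?nR_gt0 //.
lra.
Qed.

Lemma ler_gamma_factor (x y : R) : (gamma_factor n x <= gamma_factor n y) = (x <= y).
Proof. by rewrite /gamma_factor lerD2l ler_pM2r // invr_gt0 mulr_gt0 ?nR_gt0. Qed.

Lemma gamma_factor_ge1 (x : R) : 0 <= x -> 1 <= gamma_factor n x.
Proof. by move=> x0; rewrite /gamma_factor lerDl divr_ge0 // mulr_ge0 // ltW ?nR_gt0. Qed.

Section Ray.
Variable u : 'rV[R]_d.
Local Notation ray_in t := (Th (m + t *: u)).
Local Notation f t := (l (m + t *: u)).

Lemma ray_rescale (s t : R) : t != 0 -> m + s / t *: ((m + t *: u) - m) = m + s *: u.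
Proof. by move=> tn0; rewrite addrAC subrr add0r scalerA divfK. Qed.

Lemma ray_comb (a s t : R) :
  a *: (m + s *: u) + (1 - a) *: (m + t *: u) = m + (a * s + (1 - a) * t) *: u.
Proof. by rewrite !scalerDr !scalerA addrACA -!scalerDl [a + _]addrC subrK scale1r. Qed.

Lemma ray_Theta_le (s t : R) : ray_in t -> 0 <= s <= t -> ray_in s.
Proof.
move=> It /andP[s0 st]; have [t0|tn0] := eqVneq t 0.
  have -> : s = 0 by apply/le_anti; rewrite s0 -t0 st.
  by rewrite scale0r addr0; exact: Theta_sample_mean.
have t0 : 0 < t by rewrite lt0r tn0 (le_trans s0 st).
rewrite -(ray_rescale s tn0); apply: Theta_shrink It _.
by rewrite divr_ge0 ?(ltW t0) //= ler_pdivrMr // mul1r.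
Qed.

Lemma ray_loglik_le (s t : R) : ray_in t -> 0 <= s <= t -> 0 < t -> f s <= s / t * f t.
Proof.
move=> It /andP[s0 st] t0; rewrite -(ray_rescale s (lt0r_neq0 t0)).
by apply: el_loglik_shrink It _; rewrite divr_ge0 ?(ltW t0) //= ler_pdivrMr // mul1r.
Qed.

Lemma ray_loglik_mono (s t : R) : ray_in t -> 0 <= s <= t -> f s <= f t.
Proof.
move=> It hst; have /andP[s0 st] := hst; have [t0|tn0] := eqVneq t 0.
  by have -> : s = t by apply/le_anti; rewrite st t0 s0.
have t0 : 0 < t by rewrite lt0r tn0 (le_trans s0 st).
apply: le_trans (ray_loglik_le It hst t0) _.
rewrite ler_piMl //; first exact: el_loglik_ge0 (Theta_hull It).
by rewrite ler_pdivrMr // mul1r.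
Qed.

(* Convexity on the chord from [s] to [b'] bounds the slope of [f] on [[s, b]]. *)
Lemma ray_loglik_lipschitz (s t b b' : R) : ray_in b' -> 0 <= s <= t -> t <= b -> b < b' ->
  f t - f s <= (t - s) * (f b' / (b' - b)).
Proof.
move=> Ib' /andP[s0 st] tb bb'.
have b's : 0 < b' - s by rewrite subr_gt0 (le_lt_trans st (le_lt_trans tb bb')).
have b'b : 0 < b' - b by rewrite subr_gt0.
have Is : ray_in s by apply: ray_Theta_le Ib' _; rewrite s0 (le_trans st (le_trans tb (ltW bb'))).
set a := (b' - t) / (b' - s).
have a01 : 0 <= a <= 1.
  rewrite divr_ge0 ?(ltW b's) ?subr_ge0 ?(le_trans tb (ltW bb')) //=.
  by rewrite ler_pdivrMr // mul1r lerD2l lerN2.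
have a_mix : a * s + (1 - a) * b' = t by rewrite /a; field; exact: lt0r_neq0.
have := el_loglik_convex Is Ib' a01; rewrite ray_comb a_mix => conv.
have fs0 : 0 <= f s by exact: el_loglik_ge0 (Theta_hull Is).
have h1 : f t - f s <= (1 - a) * f b'.
  rewrite lerBlDl; apply: le_trans conv _; rewrite lerD2r ler_piMl //.
  by case/andP: a01.
have e1 : 1 - a = (t - s) / (b' - s) by rewrite /a; field; exact: lt0r_neq0.
have fb'0 : 0 <= f b' by exact: el_loglik_ge0 (Theta_hull Ib').
apply: le_trans h1 _; rewrite e1 mulrAC [X in _ <= X]mulrA.
apply: ler_wpM2l; first by rewrite mulr_ge0 // subr_ge0.
by rewrite lef_pV2 ?posrE // lerD2l lerN2 (le_trans st tb).
Qed.

Lemma ray_Theta_step (t r dt : R) : ball (m + t *: u) r `<=` hull -> 0 <= dt ->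
  dt * `|u| < r -> ray_in (t + dt).
Proof.
move=> tA dt0 dtr; apply: (ball_sub_Theta tA); rewrite -ball_normE /=.
rewrite opprD addrACA subrr add0r -scalerBl opprD addrA subrr add0r normrZ normrN.
by rewrite ger0_norm.
Qed.

Lemma ray_Theta_open (t : R) : u != 0 -> ray_in t -> exists2 t', t < t' & ray_in t'.
Proof.
move=> u0 /nbhs_ballP[r /= r0 tA]; have nu : 0 < `|u| by rewrite normr_gt0.
exists (t + r / (2 * `|u|)); first by rewrite ltrDl divr_gt0 ?mulr_gt0.
apply: ray_Theta_step tA _ _; first by rewrite divr_ge0 ?mulr_ge0 ?(ltW r0) ?(ltW nu).
have -> : r / (2 * `|u|) * `|u| = r / 2 by field; rewrite gt_eqF.
lra.
Qed.

Lemma ray_loglik_le_of_gamma_lt1 (t T : R) : 0 < T -> T <= 2 * t -> ray_in t ->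
  t * gamma_factor n (f t) < 1 -> f t <= 4 * N / T.
Proof.
move=> T0 Tt It; rewrite /gamma_factor => ta.
have ft0 : 0 <= f t by exact: el_loglik_ge0 (Theta_hull It).
have N0 := nR_gt0; set a := f t / (2 * N) in ta.
have a0 : 0 <= a by rewrite divr_ge0 // mulr_ge0 // ltW.
have Ta : T * a <= 2 by nra.
have -> : f t = 2 * N * a by rewrite /a mulrC divfK // gt_eqF // mulr_gt0.
rewrite ler_pdivlMr //; nra.
Qed.

(* If [t * gamma(n, f t) < 1] held all along the ray, then [f] would stay bounded by [4 N / T]
   near the supremum [T] of the ray parameters in [Th]; the uniform ball of
   [el_loglik_bounded_ball] would then let the ray go beyond [T]. *)
Lemma ray_escape : u != 0 -> exists b, [/\ 0 <= b, ray_in b & 1 <= b * gamma_factor n (f b)].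
Proof.
move=> u0; apply: contrapT => none.
set E := [set t | 0 <= t /\ ray_in t].
have small t : E t -> t * gamma_factor n (f t) < 1.
  by case=> t0 It; rewrite ltNge; apply/negP => ?; apply: none; exists t.
have E0 : E 0 by split; rewrite // scale0r addr0; exact: Theta_sample_mean.
have hasE : has_sup E.
  split; first by exists 0.
  exists 1 => t Et; have [t0 It] := Et; have := small t Et.
  have := gamma_factor_ge1 (el_loglik_ge0 (Theta_hull It)); nra.
set T := sup E.
have [t1 t10 It1] := ray_Theta_open u0 E0.2.
have T0 : 0 < T by apply: (lt_le_trans t10) (sup_upper_bound hasE _); split=> //; exact: ltW.
have f_bnd t : E t -> f t <= 4 * N / T.
  move=> [t0 It]; have T2 : 0 < T / 2 by rewrite divr_gt0.
  have [t' [t'0 It'] Tt'] := sup_adherent T2 hasE; rewrite -/T in Tt'.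
  have bnd s : E s -> T <= 2 * s -> f s <= 4 * N / T.
    by move=> Es Ts; apply: ray_loglik_le_of_gamma_lt1 T0 Ts Es.2 (small s Es).
  have [Tt|tT] := leP T (2 * t); first exact: bnd.
  apply: le_trans (bnd t' (conj t'0 It') _); last by lra.
  by apply: ray_loglik_mono It' _; rewrite t0 /=; lra.
have [rho rho0 hball] := el_loglik_bounded_ball (4 * N / T).
have nu : 0 < `|u| by rewrite normr_gt0.
set k := rho / (2 * `|u|); have k0 : 0 < k by rewrite divr_gt0 ?mulr_gt0.
have [b [b0 Ib] Tb] := sup_adherent k0 hasE.
have Ibk : ray_in (b + k).
  apply: ray_Theta_step (hball _ Ib (f_bnd b (conj b0 Ib))) (ltW k0) _.
  have -> : k * `|u| = rho / 2 by rewrite /k; field; rewrite gt_eqF.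
  lra.
have : b + k <= T by apply: (sup_upper_bound hasE); split=> //; rewrite addr_ge0 // ltW.
rewrite -/T in Tb; lra.
Qed.

(* For [x <= y]: [y gamma(f y) - x gamma(f x) = (y - x) + (y (f y - f x) + (y - x) f x) / (2 N)]. *)
Lemma ray_gamma_increment_le (b b' : R) : ray_in b' -> 0 <= b -> b < b' -> exists K : R,
  forall x y, 0 <= x -> x <= y -> y <= b ->
  `|y * gamma_factor n (f y) - x * gamma_factor n (f x)| <= K * (y - x).
Proof.
move=> Ib' b0 bb'; set q := (2 * N)^-1.
have q0 : 0 <= q by rewrite invr_ge0 mulr_ge0 ?(ltW nR_gt0).
have Ib : ray_in b by apply: ray_Theta_le Ib' _; rewrite b0 ltW.
exists (1 + f b * q + b * (f b' / (b' - b)) * q) => x y x0 xy yb.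
have Iy : ray_in y by apply: ray_Theta_le Ib _; rewrite (le_trans x0 xy).
have Ix : ray_in x by apply: ray_Theta_le Iy _; rewrite x0.
have := ray_loglik_lipschitz Ib' (introT andP (conj x0 xy)) yb bb'.
have := ray_loglik_mono Ib (introT andP (conj x0 (le_trans xy yb))).
have := ray_loglik_mono Iy (introT andP (conj x0 xy)).
have := el_loglik_ge0 (Theta_hull Ix).
have := el_loglik_ge0 (Theta_hull Ib').
move: (f x) (f y) (f b) (f b') => fx fy fb fb' fb'0 fx0 fxy fxb hK.
set K1 := fb' / (b' - b); have K10 : 0 <= K1 by rewrite divr_ge0 // subr_ge0 ltW.
rewrite /gamma_factor -/q.
have y0 := le_trans x0 xy.
have dfxy : 0 <= fy - fx by rewrite subr_ge0.
have dxy : 0 <= y - x by rewrite subr_ge0.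
have h1 := ler_pM y0 dfxy yb hK.
have h2 := ler_wpM2l dxy fxb.
have h3 := addr_ge0 (mulr_ge0 y0 dfxy) (mulr_ge0 dxy fx0).
have -> : y * (1 + fy * q) - x * (1 + fx * q) = (y - x) + q * (y * (fy - fx) + (y - x) * fx).
  by ring.
rewrite ger0_norm; last exact: addr_ge0 dxy (mulr_ge0 q0 h3).
have -> : (1 + fb * q + b * K1 * q) * (y - x)
        = (y - x) + q * (b * ((y - x) * K1) + (y - x) * fb) by ring.
by rewrite lerD2l ler_wpM2l // lerD.
Qed.

Lemma ray_reaches_one : exists2 c, ray_in c & c * gamma_factor n (f c) = 1.
Proof.
have [->|u0] := eqVneq u 0.
  exists 1; rewrite scaler0 addr0; first exact: Theta_sample_mean.
  by rewrite el_loglik_sample_mean /gamma_factor mul0r addr0 mul1r.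
have [b [b0 Ib gb]] := ray_escape u0.
have [b' bb' Ib'] := ray_Theta_open u0 Ib.
have [K gK] := ray_gamma_increment_le Ib' b0 bb'.
have [c] : exists2 c, c \in `[0, b] & c * gamma_factor n (f c) = 1.
  apply: (@IVT _ (fun t => t * gamma_factor n (f t))) => //.
    apply: (lipschitz_within_continuous (k := K)) => x y.
    by rewrite /= !in_itv /= => /andP[x0 _] /andP[_ yb] xy; exact: gK.
  by rewrite mul0r ge_min le_max gb orbT ler01.
rewrite in_itv /= => c0b gc; exists c; [exact: ray_Theta_le Ib c0b | exact: gc].
Qed.

End Ray.

Lemma hC_fixedP th : Th th -> hC X th = th <-> th = m.
Proof.
move=> hth; split=> [|->]; last by rewrite /hC subrr scaler0 addr0.
rewrite /hC => E; apply/eqP; apply: contraT => thm.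
have lpos : 0 < l th / (2 * N).
  by apply: divr_gt0; [exact: el_loglik_gt0 | rewrite mulr_gt0 ?nR_gt0].
have : gamma_factor n (l th) *: (th - m) = 1 *: (th - m).
  by rewrite scale1r -[in RHS]E addrAC subrr add0r.
move/eqP; rewrite -subr_eq0 -scalerBl scaler_eq0 [th - m == 0]subr_eq0 (negbTE thm) orbF.
by rewrite /gamma_factor addrAC subrr add0r gt_eqF.
Qed.

(* [hC x = hC y] puts [y - m] on the segment from [0] to [x - m] (after possibly swapping [x] and
   [y]), so [l y <= l x]; hence the two expansion factors agree. *)
Lemma hC_inj : set_inj Th (hC X).
Proof.
move=> x y /set_mem hx /set_mem hy; rewrite /hC => /addrI.
wlog gxy : x y hx hy / gamma_factor n (l x) <= gamma_factor n (l y) => [hwlog E|E].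
  have [/hwlog|/ltW/hwlog] := leP (gamma_factor n (l x)) (gamma_factor n (l y)).
    exact.
  by move=> h; apply/esym/h.
set gx := gamma_factor n (l x) in gxy E; set gy := gamma_factor n (l y) in gxy E.
have gx1 : 1 <= gx by exact: gamma_factor_ge1 (el_loglik_ge0 (Theta_hull hx)).
have gy0 : 0 < gy by apply: lt_le_trans (le_trans gx1 gxy).
have c01 : 0 <= gx / gy <= 1.
  by rewrite divr_ge0 ?(ltW gy0) ?(le_trans ler01 gx1) //= ler_pdivrMr // mul1r.
have yE : y = m + gx / gy *: (x - m).
  by rewrite mulrC -scalerA E scalerA mulVf ?gt_eqF // scale1r addrC subrK.
have lyx : l y <= l x.
  rewrite {1}yE; apply: le_trans (el_loglik_shrink hx c01) _.
  rewrite ler_piMl //; first exact: el_loglik_ge0 (Theta_hull hx).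
  by case/andP: c01.
have gyx : gy <= gx by rewrite ler_gamma_factor.
have gxy_eq : gx = gy by apply/le_anti; rewrite gxy gyx.
by move: E; rewrite gxy_eq => /(scalerI (lt0r_neq0 gy0))/addIr.
Qed.

Lemma hC_surj : set_surj Th [set: 'rV[R]_d] (hC X).
Proof.
move=> y _; have [c Ic gc] := ray_reaches_one (y - m).
exists (m + c *: (y - m)) => //.
by rewrite /hC addrAC subrr add0r scalerA mulrC gc scale1r addrC subrK.
Qed.

End EmpiricalLikelihood.

Theorem theorem1 (R : realType) (d n : nat) (X : 'I_n -> 'rV[R]_d) :
  (d < n)%N ->
  Theta_n X !=set0 ->
  (* (i) unique fixed point, namely the sample mean *)
  (Theta_n X (sample_mean X) /\
   forall theta, Theta_n X theta -> (hC X theta = theta <-> theta = sample_mean X)) /\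
  (* (ii) on each contour c(tau), h_n^C is the similarity with factor gamma(n,tau) *)
  (forall tau : R, 0 <= tau -> forall theta, Theta_n X theta -> el_loglik X theta = tau ->
     hC X theta = sample_mean X + gamma_factor n tau *: (theta - sample_mean X)) /\
  (* (iii) bijection from Theta_n onto R^d *)
  set_bij (Theta_n X) [set: 'rV[R]_d] (hC X).
Proof.
move=> dn Theta_neq0; have n_gt0 : (0 < n)%N by apply: leq_ltn_trans dn.
split; first by split; [exact: Theta_sample_mean | exact: hC_fixedP].
split; first by move=> tau _ th _ <-.
by split; [| exact: hC_inj | exact: hC_surj].
Qed.
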